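(* Suppose $C(X)_\mathcal{P}$ contains the characteristic function $\chi_{\{x\}}$ for every $x\in X$. Then: (1) every free ideal and every essential ideal of $C(X)_\mathcal{P}$ has depth zero; (2) every maximal ideal of $C(X)_\mathcal{P}$ has depth zero; (3) every prime ideal of $C(X)_\mathcal{P}$ has depth zero.
   Context: Let $(X,\tau)$ be a $T_1$ topological space and $\mathcal{P}$ an ideal of closed subsets of $X$ (a nonempty family of closed sets closed under finite unions and under taking closed subsets). For $f\colon X\to\mathbb{R}$, $D_f$ denotes the set of points of discontinuity of $f$, and $C(X)_\mathcal{P}=\{f\colon X\to\mathbb{R} : \overline{D_f}\in\mathcal{P}\}$, a commutative ring with unity under pointwise operations. For $f\in C(X)_\mathcal{P}$, $Z_\mathcal{P}(f)=\{x: f(x)=0\}$; an ideal $I$ is free if $\bigcap\{Z_\mathcal{P}(f): f\in I\}=\emptyset$. An ideal is essential if it intersects every nonzero ideal nontrivially. For an ideal $I$ regarded as a $C(X)_\mathcal{P}$-module $M$, an element $a$ is $M$-regular if $am\neq 0$ for all $m\in M\setminus\{0\}$; a sequence $a_1,\dots,a_n$ is $I$-regular if $a_1$ is $I$-regular, each $a_k$ is $I/(a_1I+\dots+a_{k-1}I)$-regular, and $a_1I+\dots+a_nI\neq I$; the depth of $I$ is the length of a maximal $I$-regular sequence. *)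

From HB Require Import structures.
From mathcomp Require Import all_boot all_order all_algebra.
From mathcomp Require Import all_classical all_reals all_analysis.
Set Implicit Arguments. Unset Strict Implicit. Unset Printing Implicit Defensive.
Import Order.TTheory GRing.Theory Num.Theory.
Import numFieldNormedType.Exports.
Local Open Scope classical_set_scope.
Local Open Scope ring_scope.

Section CP.
Variables (X : topologicalType) (R : realType).

Definition closed_ideal (P : set (set X)) : Prop :=
  [/\ P !=set0,
      (forall A, P A -> closed A),
      (forall A B, P A -> P B -> P (A `|` B)) &
      (forall A B, P A -> closed B -> B `<=` A -> P B)].

Definition discont (f : X -> R) : set X := [set x | ~ {for x, continuous f}].

Definition CP (P : set (set X)) (f : X -> R) : Prop := P (closure (discont f)).

Definition zero_fun : X -> R := fun _ => 0.

Definition is_ideal (P : set (set X)) (I : set (X -> R)) : Prop :=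
  [/\ I `<=` CP P,
      I zero_fun,
      (forall f g, I f -> I g -> I (f \+ g)) &
      (forall f g, CP P f -> I g -> I (f \* g))].

Definition ZP (f : X -> R) : set X := [set x | f x = 0].

Definition free_ideal (P : set (set X)) (I : set (X -> R)) : Prop :=
  is_ideal P I /\ \bigcap_(f in I) ZP f = set0.

Definition essential_ideal (P : set (set X)) (I : set (X -> R)) : Prop :=
  is_ideal P I /\
  forall J, is_ideal P J -> J != [set zero_fun] ->
    exists f, [/\ I f, J f & f != zero_fun].

Definition maximal_ideal (P : set (set X)) (I : set (X -> R)) : Prop :=
  [/\ is_ideal P I, I != CP P &
      forall J, is_ideal P J -> I `<=` J -> J = I \/ J = CP P].

Definition prime_ideal (P : set (set X)) (I : set (X -> R)) : Prop :=
  [/\ is_ideal P I, I != CP P &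
      forall f g, CP P f -> CP P g -> I (f \* g) -> I f \/ I g].

(* a_1 I + ... + a_n I, as a subset of I *)
Fixpoint sum_mult (I : set (X -> R)) (s : seq (X -> R)) : set (X -> R) :=
  match s with
  | [::] => [set zero_fun]
  | a :: s' => [set h | exists m, exists y,
                 [/\ I m, sum_mult I s' y & h = (a \* m) \+ y]]
  end.

Definition quot_regular (I J : set (X -> R)) (a : X -> R) : Prop :=
  forall m, I m -> ~ J m -> ~ J (a \* m).

Definition regular_seq (P : set (set X)) (I : set (X -> R)) (s : seq (X -> R))
  : Prop :=
  (forall k, (k < size s)%N -> CP P (nth zero_fun s k)) /\
  (forall k, (k < size s)%N ->
     quot_regular I (sum_mult I (take k s)) (nth zero_fun s k)) /\
  sum_mult I s != I.

(* depth of I is zero: every I-regular sequence is empty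
   (so the empty sequence is the (unique) maximal one) *)
Definition depth_zero (P : set (set X)) (I : set (X -> R)) : Prop :=
  forall s, regular_seq P I s -> s = [::].

End CP.

From HB Require Import structures.
From mathcomp Require Import all_boot all_order all_algebra.
From mathcomp Require Import all_classical all_reals all_analysis.
Set Implicit Arguments. Unset Strict Implicit. Unset Printing Implicit Defensive.
Import Order.TTheory GRing.Theory Num.Theory.
Import numFieldNormedType.Exports.
Local Open Scope classical_set_scope.
Local Open Scope ring_scope.

(* A regular sequence of positive length must start with an element [a] that
   is a non-zero-divisor on [I] with [a I <> I]; we show that no such [a]
   exists once the common zero set [Z(I)] has at most one point.  If [a]
   vanishes at a point [y] outside [Z(I)], pick [f] in [I] with [f y <> 0]:
   then [chi_y f] is a nonzero element of [I] killed by [a].  Otherwise the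
   zeros of [a] lie in [Z(I)], so [1/a] (set to [0] on the zero set) is in
   [C(X)_P], since it is discontinuous only at discontinuities of [a] and at
   non-isolated zeros [y], i.e. where [chi_y] is discontinuous; and every
   [f] in [I] is then [a (f/a)], so [a I = I].  Free and essential ideals
   have [Z(I)] empty; for maximal and prime ideals [Z(I)] is a subsingleton
   because [chi_y chi_z = 0] for [y <> z]. *)

Section RingCP.
Variables (X : topologicalType) (R : realType) (P : set (set X)).
Hypothesis hP : closed_ideal P.

Local Notation zero_fun := (@zero_fun X R).

Lemma closed_ideal0 : P set0.
Proof. by case: hP => -[A PA] _ _ sub; apply: (sub A) => //; exact: closed0. Qed.

Lemma CP_discont_subU (f g h : X -> R) : CP P f -> CP P g ->
  discont h `<=` discont f `|` discont g -> CP P h.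
Proof.
move=> Pf Pg hfg; case: hP => _ _ U sub.
apply: (sub _ _ (U _ _ Pf Pg)); first exact: closed_closure.
by rewrite -closureU; apply: closureS.
Qed.

Lemma CP_cst (c : R) : CP P (fun _ : X => c).
Proof.
rewrite /CP (_ : discont _ = set0) ?closure0; first exact: closed_ideal0.
by rewrite -subset0 => x /= []; exact: cvg_cst.
Qed.

Lemma CP_add (f g : X -> R) : CP P f -> CP P g -> CP P (f \+ g).
Proof.
move=> Pf Pg; apply: (CP_discont_subU Pf Pg) => x /= Dx.
apply: contrapT => /not_orP[/contrapT cf /contrapT cg]; apply: Dx.
exact: continuousD.
Qed.

Lemma CP_mul (f g : X -> R) : CP P f -> CP P g -> CP P (f \* g).
Proof.
move=> Pf Pg; apply: (CP_discont_subU Pf Pg) => x /= Dx.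
apply: contrapT => /not_orP[/contrapT cf /contrapT cg]; apply: Dx.
exact: continuousM.
Qed.

Definition chi (x : X) : X -> R := \1_[set x].

Lemma chiE x z : chi x z = if z == x then 1 else 0.
Proof. by rewrite /chi indicE in_set1; case: (z == x). Qed.

Lemma chi_neq0 x : chi x <> zero_fun.
Proof.
by move/(congr1 (fun f => f x)); rewrite chiE eqxx => /eqP; rewrite oner_eq0.
Qed.

Lemma chi_mul_eq0 (a f : X -> R) y : a y = 0 -> a \* (chi y \* f) = zero_fun.
Proof.
move=> ay; apply/funext => z; rewrite /= chiE /zero_fun.
by case: eqVneq => [->|_]; rewrite ?ay ?mul0r ?mulr0.
Qed.

Lemma chi_mul_neq0 (f : X -> R) y : f y <> 0 -> chi y \* f <> zero_fun.
Proof. by move=> fy /(congr1 (fun g => g y)); rewrite /= chiE eqxx mul1r. Qed.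

(* If [chi_y] is continuous at [y] then [{y}] is a neighbourhood of [y]. *)
Lemma continuous_at_of_chi (y : X) (f : X -> R) :
  {for y, continuous (chi y)} -> {for y, continuous f}.
Proof.
move=> /cvgrPdist_lt /(_ 1 ltr01) near_y.
apply: cvg_near_cst; apply: filterS near_y => z.
rewrite !chiE eqxx; case: eqVneq => [->//|_].
by rewrite subr0 normr1 ltxx.
Qed.

Lemma discont_inv (a : X -> R) :
  discont (fun z => (a z)^-1) `<=`
  discont a `|` [set y | a y = 0 /\ discont (chi y) y].
Proof.
move=> x /= Dx; apply: contrapT => /not_orP[/contrapT ca Zx]; apply: Dx.
have [a0|an0] := eqVneq (a x) 0; last exact: continuousV.
by apply: continuous_at_of_chi; apply: contrapT => Dchi; apply: Zx.
Qed.

Hypothesis CP_chi : forall x, CP P (chi x).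

Lemma CP_inv (a : X -> R) : CP P a -> is_subset1 (ZP a) ->
  CP P (fun z => (a z)^-1).
Proof.
move=> Pa zeros1.
case: (pselect (exists z, a z = 0)) => [[z az]|nozero].
  apply: (CP_discont_subU Pa (CP_chi z)) => y /discont_inv [|[ay Dy]].
    by left.
  by right; rewrite -(zeros1 _ _ ay az).
apply: (CP_discont_subU Pa Pa) => y /discont_inv [|[ay _]]; first by left.
by case: nozero; exists y.
Qed.

Section Ideal.
Variable I : set (X -> R).
Hypothesis hI : is_ideal P I.

Definition zero_divisor_on (a : X -> R) : Prop :=
  exists m, [/\ I m, m <> zero_fun & a \* m = zero_fun].

Definition divides_ideal (a : X -> R) : Prop :=
  forall f, I f -> exists g, I g /\ f = a \* g.

Lemma sum_mult_sub s : (forall k, (k < size s)%N -> CP P (nth zero_fun s k)) ->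
  sum_mult I s `<=` I.
Proof.
case: hI => _ I0 Iadd Imul.
elim: s => [|b s IH] Ps f /=; first by move=> ->.
move=> [m [y [Im sy ->]]]; apply: Iadd; first by apply: Imul (Ps 0%N _) Im.
by apply: IH sy => k; exact: (Ps k.+1).
Qed.

Lemma sum_mult0 s : sum_mult I s zero_fun.
Proof.
case: hI => _ I0 _ _; elim: s => [|b s IH] //=; exists zero_fun, zero_fun.
by split => //; apply/funext => y; rewrite /= /zero_fun mulr0 addr0.
Qed.

Lemma depth_zero_of_dichotomy :
  (forall a, CP P a -> zero_divisor_on a \/ divides_ideal a) -> depth_zero P I.
Proof.
move=> dich [|a s] // [Ps [regular neqI]]; exfalso.
have Pa := Ps 0%N erefl; have rega := regular 0%N erefl; rewrite /= in Pa rega.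
case: (dich a Pa) => [[m [Im m0 am]]|diva].
  by apply: (rega m Im m0); rewrite am.
move/eqP: neqI; apply; apply/seteqP; split; first exact: sum_mult_sub.
move=> f /diva [g [Ig ->]]; exists g, zero_fun; split => //; first exact: sum_mult0.
by apply/funext => y; rewrite /= /zero_fun addr0.
Qed.

Definition common_zeros : set X := \bigcap_(f in I) ZP f.

Lemma depth_zero_of_common_zeros_subset1 :
  is_subset1 common_zeros -> depth_zero P I.
Proof.
move=> Z1; apply: depth_zero_of_dichotomy => a Pa.
case: (pselect (exists y, a y = 0 /\ ~ common_zeros y)) => [[y [ay Zy]]|].
  have [f [If fy]] : exists f, I f /\ f y <> 0.
    apply: contrapT => nof; apply: Zy => f If.
    by apply: contrapT => fy; apply: nof; exists f.
  left; exists (chi y \* f); split; last exact: chi_mul_eq0.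
    by case: hI => _ _ _ Imul; apply: Imul.
  exact: chi_mul_neq0.
move=> nozero.
have Za y : a y = 0 -> common_zeros y.
  by move=> ay; apply: contrapT => Zy; apply: nozero; exists y.
right => f If; exists ((fun z => (a z)^-1) \* f); split.
  case: hI => _ _ _ Imul; apply: Imul If; apply: CP_inv Pa _ => y z /Za + /Za.
  exact: Z1.
apply/funext => y /=; have [ay|an0] := eqVneq (a y) 0.
  by rewrite ay mul0r; exact: (Za y ay f If).
by rewrite mulrA mulrV ?mul1r // unitfE.
Qed.

Lemma depth_zero_of_common_zeros0 : common_zeros = set0 -> depth_zero P I.
Proof.
by move=> Z0; apply: depth_zero_of_common_zeros_subset1; rewrite Z0 => y z [].
Qed.

End Ideal.

Lemma essential_common_zeros0 I : essential_ideal P I -> common_zeros I = set0.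
Proof.
move=> [hI ess]; rewrite -subset0 => y Zy.
pose J := [set g : X -> R | CP P g /\ forall z, z != y -> g z = 0].
have hJ : is_ideal P J.
  split=> [g [] //|||].
  - by split => [|z _]; [exact: CP_cst|].
  - move=> f g [Pf f0] [Pg g0]; split => [|z zy]; first exact: CP_add.
    by rewrite /= f0 ?g0 ?addr0.
  - move=> f g Pf [Pg g0]; split => [|z zy]; first exact: CP_mul.
    by rewrite /= g0 ?mulr0.
have Jchi : J (chi y) by split => // z zy; rewrite chiE (negbTE zy).
have J0 : J != [set zero_fun].
  by apply/eqP => J0; move: Jchi; rewrite J0; exact: chi_neq0.
have [f [If [_ Jf] /eqP f0]] := ess J hJ J0; apply: f0.
apply/funext => z; case: (eqVneq z y) => [->|zy]; last exact: Jf.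
exact: Zy.
Qed.

Lemma prime_common_zeros_subset1 I : prime_ideal P I ->
  is_subset1 (common_zeros I).
Proof.
move=> [[_ I0 _ _] _ Iprime] y z Zy Zz; apply: contrapT => /eqP yz.
have chi_yz : chi y \* chi z = zero_fun.
  apply/funext => u; rewrite /= !chiE /zero_fun.
  by case: eqVneq => [->|_]; rewrite ?(negbTE yz) ?mulr0 ?mul0r.
have chi_notin u : common_zeros I u -> ~ I (chi u).
  by move=> Zu /Zu; rewrite /ZP /= chiE eqxx => /eqP; rewrite oner_eq0.
case: (Iprime _ _ (CP_chi y) (CP_chi z)); first by rewrite chi_yz.
  exact: chi_notin.
exact: chi_notin.
Qed.

Lemma vanishing_ideal x : is_ideal P [set g : X -> R | CP P g /\ g x = 0].
Proof.
split=> [g [] //|||].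
- by split; [exact: CP_cst|].
- by move=> f g [Pf fx] [Pg gx]; split; [exact: CP_add|rewrite /= fx gx addr0].
- by move=> f g Pf [Pg gx]; split; [exact: CP_mul|rewrite /= gx mulr0].
Qed.

Lemma maximal_common_zeros_subset1 I : maximal_ideal P I ->
  is_subset1 (common_zeros I).
Proof.
move=> [[ICP _ _ _] _ Imax] y z Zy Zz; apply: contrapT => /eqP yz.
have IM : I `<=` [set g | CP P g /\ g y = 0].
  by move=> f If; split; [exact: ICP|exact: Zy].
have Ichi : I (chi z).
  case: (Imax _ (vanishing_ideal y) IM) => [<-|MCP].
    by split; [exact: CP_chi|rewrite chiE (negbTE yz)].
  have : CP P (chi y) by exact: CP_chi.
  by rewrite -MCP => -[_]; rewrite chiE eqxx => /eqP; rewrite oner_eq0.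
by move: (Zz _ Ichi); rewrite /ZP /= chiE eqxx => /eqP; rewrite oner_eq0.
Qed.

End RingCP.

Theorem theorem4p6 (X : topologicalType) (R : realType) (P : set (set X)) :
  accessible_space X ->
  closed_ideal P ->
  (forall x : X, @CP X R P (\1_[set x] : X -> R)) ->
  [/\ (forall I : set (X -> R),
         (free_ideal P I \/ essential_ideal P I) -> depth_zero P I),
      (forall I : set (X -> R), maximal_ideal P I -> depth_zero P I) &
      (forall I : set (X -> R), prime_ideal P I -> depth_zero P I)].
Proof.
move=> _ hP CP_chi; split=> I.
- case=> [[hI Z0]|Iess].
    exact: (depth_zero_of_common_zeros0 hP CP_chi hI Z0).
  have [hI _] := Iess; apply: (depth_zero_of_common_zeros0 hP CP_chi hI).
  exact: (essential_common_zeros0 hP CP_chi Iess).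
- move=> Imax; have [hI _ _] := Imax.
  apply: (depth_zero_of_common_zeros_subset1 hP CP_chi hI).
  exact: (maximal_common_zeros_subset1 hP CP_chi Imax).
- move=> Iprime; have [hI _ _] := Iprime.
  apply: (depth_zero_of_common_zeros_subset1 hP CP_chi hI).
  exact: (prime_common_zeros_subset1 CP_chi Iprime).
Qed.
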